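(* In every bigroupoid $\mathcal B$, every formal diagram commutes; equivalently, any two canonical 2-cells (images under $J_b$ of 2-cells of $\mathcal F_b\mathcal B$) with the same source and target that arise as images of parallel 2-cells of $\mathcal F_b\mathcal B$ are equal, since every diagram of 2-cells in $\mathcal F_b\mathcal B$ commutes.
   Context: A graph consists of a set of nodes and sets of edges between pairs of nodes. A bigroupoid consists of a set of 0-cells, hom-groupoids $\mathcal B(A,B)$ (objects: 1-cells; arrows: 2-cells), composition functors $*$, identity 1-cells $1_A$, inversion functors $(-)^*$ and natural isomorphisms $\mathbf a:(h*g)*f\Rightarrow h*(g*f)$, $\mathbf l:1*f\Rightarrow f$, $\mathbf r:f*1\Rightarrow f$, $\mathbf e:f^**f\Rightarrow 1$, $\mathbf i:1\Rightarrow f*f^*$ satisfying the pentagon, $(\mathrm{id}*\mathbf l)\circ\mathbf a=\mathbf r*\mathrm{id}$, and $\mathbf r_f\circ(\mathrm{id}*\mathbf e_f)\circ\mathbf a\circ(\mathbf i_f*\mathrm{id})=\mathbf l_f$. A strict morphism preserves all structure on the nose. Every bigroupoid has an underlying graph (0-cells and 1-cells). For a graph $\mathcal G$, the free bigroupoid $\mathcal F_b\mathcal G$ comes with a graph morphism $I_b:\mathcal G\to\mathcal F_b\mathcal G$ such that for every bigroupoid $\mathcal B$ and graph morphism $F:\mathcal G\to\mathcal B$ there is a unique strict morphism $\widetilde F$ with $\widetilde FI_b=F$. For a bigroupoid $\mathcal B$, let $\mathcal F_b\mathcal B$ be the free bigroupoid on its underlying graph and $J_b:\mathcal F_b\mathcal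 B\to\mathcal B$ the unique strict morphism extending the identity of the underlying graph. A diagram of 2-cells in $\mathcal B$ is a formal diagram if it is the image under $J_b$ of a diagram of 2-cells in $\mathcal F_b\mathcal B$; a single 2-cell arising this way is called canonical. *)

Set Implicit Arguments.
Unset Strict Implicit.

Record BigSig := {
  Ob   : Type;
  Hom  : Ob -> Ob -> Type;
  Cell : forall A B, Hom A B -> Hom A B -> Type;
  vid   : forall A B (f : Hom A B), Cell f f;
  vcomp : forall A B (f g h : Hom A B), Cell g h -> Cell f g -> Cell f h;
  vinv  : forall A B (f g : Hom A B), Cell f g -> Cell g f;
  (* composition functor  * : B(B,C) x B(A,B) -> B(A,C);  h*g means "g then h" *)
  comp  : forall A B C, Hom B C -> Hom A B -> Hom A C;
  hcomp : forall A B C (g g' : Hom B C) (f f' : Hom A B),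
            Cell g g' -> Cell f f' -> Cell (comp g f) (comp g' f');
  one   : forall A, Hom A A;
  inv1  : forall A B, Hom A B -> Hom B A;
  inv2  : forall A B (f f' : Hom A B), Cell f f' -> Cell (inv1 f) (inv1 f');
  assoc : forall A B C D (h : Hom C D) (g : Hom B C) (f : Hom A B),
            Cell (comp (comp h g) f) (comp h (comp g f));
  lun   : forall A B (f : Hom A B), Cell (comp (one B) f) f;
  run   : forall A B (f : Hom A B), Cell (comp f (one A)) f;
  ev    : forall A B (f : Hom A B), Cell (comp (inv1 f) f) (one A);
  coev  : forall A B (f : Hom A B), Cell (one B) (comp f (inv1 f))
}.

Arguments Hom : clear implicits.
Arguments Cell {S A B} f g : rename.
Arguments vid {S A B} f : rename.
Arguments vcomp {S A B f g h} _ _ : rename.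
Arguments vinv {S A B f g} _ : rename.
Arguments comp {S A B C} _ _ : rename.
Arguments hcomp {S A B C g g' f f'} _ _ : rename.
Arguments one {S} A : rename.
Arguments inv1 {S A B} _ : rename.
Arguments inv2 {S A B f f'} _ : rename.
Arguments assoc {S A B C D} h g f : rename.
Arguments lun {S A B} f : rename.
Arguments run {S A B} f : rename.
Arguments ev {S A B} f : rename.
Arguments coev {S A B} f : rename.

Definition is_bigroupoid (S : BigSig) : Prop :=
  (forall A B (f g h k : Hom S A B) (x : Cell f g) (y : Cell g h) (z : Cell h k),
      vcomp z (vcomp y x) = vcomp (vcomp z y) x) /\
  (forall A B (f g : Hom S A B) (x : Cell f g), vcomp (vid g) x = x) /\
  (forall A B (f g : Hom S A B) (x : Cell f g), vcomp x (vid f) = x) /\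
  (forall A B (f g : Hom S A B) (x : Cell f g), vcomp (vinv x) x = vid f) /\
  (forall A B (f g : Hom S A B) (x : Cell f g), vcomp x (vinv x) = vid g) /\
  (forall A B C (g : Hom S B C) (f : Hom S A B),
      hcomp (vid g) (vid f) = vid (comp g f)) /\
  (forall A B C (g1 g2 g3 : Hom S B C) (f1 f2 f3 : Hom S A B)
          (y : Cell g1 g2) (y' : Cell g2 g3) (x : Cell f1 f2) (x' : Cell f2 f3),
      hcomp (vcomp y' y) (vcomp x' x) = vcomp (hcomp y' x') (hcomp y x)) /\
  (forall A B (f : Hom S A B), inv2 (vid f) = vid (inv1 f)) /\
  (forall A B (f1 f2 f3 : Hom S A B) (x : Cell f1 f2) (x' : Cell f2 f3),
      inv2 (vcomp x' x) = vcomp (inv2 x') (inv2 x)) /\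
  (* naturality of a, l, r, e, i  (they are isomorphisms since B(A,B) are groupoids) *)
  (forall A B C D (h h' : Hom S C D) (g g' : Hom S B C) (f f' : Hom S A B)
          (z : Cell h h') (y : Cell g g') (x : Cell f f'),
      vcomp (assoc h' g' f') (hcomp (hcomp z y) x)
      = vcomp (hcomp z (hcomp y x)) (assoc h g f)) /\
  (forall A B (f f' : Hom S A B) (x : Cell f f'),
      vcomp (lun f') (hcomp (vid (one B)) x) = vcomp x (lun f)) /\
  (forall A B (f f' : Hom S A B) (x : Cell f f'),
      vcomp (run f') (hcomp x (vid (one A))) = vcomp x (run f)) /\
  (forall A B (f f' : Hom S A B) (x : Cell f f'),
      vcomp (ev f') (hcomp (inv2 x) x) = vcomp (vid (one A)) (ev f)) /\
  (forall A B (f f' : Hom S A B) (x : Cell f f'),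
      vcomp (coev f') (vid (one B)) = vcomp (hcomp x (inv2 x)) (coev f)) /\
  (forall A B C D E (k : Hom S D E) (h : Hom S C D) (g : Hom S B C) (f : Hom S A B),
      vcomp (assoc k h (comp g f)) (assoc (comp k h) g f)
      = vcomp (hcomp (vid k) (assoc h g f))
              (vcomp (assoc k (comp h g) f) (hcomp (assoc k h g) (vid f)))) /\
  (forall A B C (g : Hom S B C) (f : Hom S A B),
      vcomp (hcomp (vid g) (lun f)) (assoc g (one B) f)
      = hcomp (run g) (vid f)) /\
  (forall A B (f : Hom S A B),
      vcomp (run f)
        (vcomp (hcomp (vid f) (ev f))
           (vcomp (assoc f (inv1 f) f) (hcomp (coev f) (vid f))))
      = lun f).

(* The free bigroupoid on the underlying graph of S, presented by     *)
(* terms: 1-cells of F_b are the formal words below (no relations at  *)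
(* the level of 1-cells); 2-cells of F_b are the formal 2-cell terms  *)
(* below modulo the bigroupoid axioms.                                *)

Section Free.
Variable S : BigSig.

Inductive FHom : Ob S -> Ob S -> Type :=
  | Fgen  : forall A B, Hom S A B -> FHom A B
  | Fone  : forall A, FHom A A
  | Fcomp : forall A B C, FHom B C -> FHom A B -> FHom A C
  | Finv  : forall A B, FHom A B -> FHom B A.

Inductive FCell : forall A B, FHom A B -> FHom A B -> Type :=
  | Cid    : forall A B (f : FHom A B), FCell f f
  | Cvcomp : forall A B (f g h : FHom A B), FCell g h -> FCell f g -> FCell f h
  | Cvinv  : forall A B (f g : FHom A B), FCell f g -> FCell g f
  | Chcomp : forall A B C (g g' : FHom B C) (f f' : FHom A B),
               FCell g g' -> FCell f f' -> FCell (Fcomp g f) (Fcomp g' f')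
  | Cinv2  : forall A B (f f' : FHom A B), FCell f f' -> FCell (Finv f) (Finv f')
  | Cassoc : forall A B C D (h : FHom C D) (g : FHom B C) (f : FHom A B),
               FCell (Fcomp (Fcomp h g) f) (Fcomp h (Fcomp g f))
  | Clun   : forall A B (f : FHom A B), FCell (Fcomp (Fone B) f) f
  | Crun   : forall A B (f : FHom A B), FCell (Fcomp f (Fone A)) f
  | Cev    : forall A B (f : FHom A B), FCell (Fcomp (Finv f) f) (Fone A)
  | Ccoev  : forall A B (f : FHom A B), FCell (Fone B) (Fcomp f (Finv f)).

Fixpoint J1 A B (f : FHom A B) : Hom S A B :=
  match f in FHom A B return Hom S A B with
  | Fgen x => x
  | Fone A => one A
  | Fcomp g f => comp (J1 g) (J1 f)
  | Finv f => inv1 (J1 f)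
  end.

(* J_b on 2-cells (on representatives; it respects the bigroupoid axioms
   whenever S is a bigroupoid, hence induces the strict morphism J_b) *)
Fixpoint J2 A B (f g : FHom A B) (x : FCell f g) : Cell (J1 f) (J1 g) :=
  match x in @FCell A B f g return Cell (J1 f) (J1 g) with
  | Cid f => vid (J1 f)
  | Cvcomp y x => vcomp (J2 y) (J2 x)
  | Cvinv x => vinv (J2 x)
  | Chcomp y x => hcomp (J2 y) (J2 x)
  | Cinv2 x => inv2 (J2 x)
  | Cassoc h g f => assoc (J1 h) (J1 g) (J1 f)
  | Clun f => lun (J1 f)
  | Crun f => run (J1 f)
  | Cev f => ev (J1 f)
  | Ccoev f => coev (J1 f)
  end.

End Free.

Arguments Fgen {S A B} _.
Arguments Fone {S} A.
Arguments Fcomp {S A B C} _ _.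
Arguments Finv {S A B} _.
Arguments FHom : clear implicits.
Arguments FCell {S A B} _ _.
Arguments J1 {S A B} _.
Arguments J2 {S A B f g} _.

(* Coherence by normalisation.  Fix a 0-cell X.  Reduced paths from X, built
   from 1-cells of B and their formal inverses, are normal forms for the free
   groupoid on the underlying graph, and every free 1-cell w acts on them
   ([act w]).  By recursion on w, the structural 2-cells of B give an
   invertible 2-cell [act_cell w t : J(w) * J(t) => J(act w t)].  By induction
   on a free 2-cell x : f => g one shows that [act f] and [act g] agree and that
   [act_cell] carries [J(x) * J(t)] to the identity between normal forms.
   Taking t empty, [J(x) * 1_X] depends only on f and g, and whiskering with an
   identity is faithful. *)

From Stdlib Require Import ClassicalEpsilon ProofIrrelevance Eqdep.
Set Implicit Arguments.
Unset Strict Implicit.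

Section Bigroupoid.
Variable S : BigSig.
Hypothesis HS : is_bigroupoid S.

Ltac destruct_bigroupoid :=
  destruct HS as (vcompA' & vcomp_idl' & vcomp_idr' & vcomp_invl' & vcomp_invr' &
                  hcomp_id' & hcomp_vcomp' & _ & _ & assoc_nat' & lun_nat' & run_nat' &
                  ev_nat' & _ & pentagon' & triangle' & zigzag').

Lemma vcompA A B (f g h k : Hom S A B) (x : Cell f g) (y : Cell g h) (z : Cell h k) :
  vcomp z (vcomp y x) = vcomp (vcomp z y) x.
Proof. destruct_bigroupoid; apply vcompA'. Qed.

Lemma vcomp_idl A B (f g : Hom S A B) (x : Cell f g) : vcomp (vid g) x = x.
Proof. destruct_bigroupoid; apply vcomp_idl'. Qed.

Lemma vcomp_idr A B (f g : Hom S A B) (x : Cell f g) : vcomp x (vid f) = x.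
Proof. destruct_bigroupoid; apply vcomp_idr'. Qed.

Lemma vcomp_invl A B (f g : Hom S A B) (x : Cell f g) : vcomp (vinv x) x = vid f.
Proof. destruct_bigroupoid; apply vcomp_invl'. Qed.

Lemma vcomp_invr A B (f g : Hom S A B) (x : Cell f g) : vcomp x (vinv x) = vid g.
Proof. destruct_bigroupoid; apply vcomp_invr'. Qed.

Lemma hcomp_id A B C (g : Hom S B C) (f : Hom S A B) :
  hcomp (vid g) (vid f) = vid (comp g f).
Proof. destruct_bigroupoid; apply hcomp_id'. Qed.

Lemma hcomp_vcomp A B C (g1 g2 g3 : Hom S B C) (f1 f2 f3 : Hom S A B)
      (y : Cell g1 g2) (y' : Cell g2 g3) (x : Cell f1 f2) (x' : Cell f2 f3) :
  hcomp (vcomp y' y) (vcomp x' x) = vcomp (hcomp y' x') (hcomp y x).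
Proof. destruct_bigroupoid; apply hcomp_vcomp'. Qed.

Lemma assoc_nat A B C D (h h' : Hom S C D) (g g' : Hom S B C) (f f' : Hom S A B)
      (z : Cell h h') (y : Cell g g') (x : Cell f f') :
  vcomp (assoc h' g' f') (hcomp (hcomp z y) x) = vcomp (hcomp z (hcomp y x)) (assoc h g f).
Proof. destruct_bigroupoid; apply assoc_nat'. Qed.

Lemma lun_nat A B (f f' : Hom S A B) (x : Cell f f') :
  vcomp (lun f') (hcomp (vid (one B)) x) = vcomp x (lun f).
Proof. destruct_bigroupoid; apply lun_nat'. Qed.

Lemma run_nat A B (f f' : Hom S A B) (x : Cell f f') :
  vcomp (run f') (hcomp x (vid (one A))) = vcomp x (run f).
Proof. destruct_bigroupoid; apply run_nat'. Qed.

Lemma ev_nat A B (f f' : Hom S A B) (x : Cell f f') :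
  vcomp (ev f') (hcomp (inv2 x) x) = vcomp (vid (one A)) (ev f).
Proof. destruct_bigroupoid; apply ev_nat'. Qed.

Lemma pentagon A B C D E (k : Hom S D E) (h : Hom S C D) (g : Hom S B C) (f : Hom S A B) :
  vcomp (assoc k h (comp g f)) (assoc (comp k h) g f)
  = vcomp (hcomp (vid k) (assoc h g f))
          (vcomp (assoc k (comp h g) f) (hcomp (assoc k h g) (vid f))).
Proof. destruct_bigroupoid; apply pentagon'. Qed.

Lemma triangle A B C (g : Hom S B C) (f : Hom S A B) :
  vcomp (hcomp (vid g) (lun f)) (assoc g (one B) f) = hcomp (run g) (vid f).
Proof. destruct_bigroupoid; apply triangle'. Qed.

Lemma zigzag A B (f : Hom S A B) :
  vcomp (run f) (vcomp (hcomp (vid f) (ev f))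
    (vcomp (assoc f (inv1 f) f) (hcomp (coev f) (vid f)))) = lun f.
Proof. destruct_bigroupoid; apply zigzag'. Qed.

Lemma vcomp_cancelr A B (f g h : Hom S A B) (x : Cell f g) (u v : Cell g h) :
  vcomp u x = vcomp v x -> u = v.
Proof.
  intro E. rewrite <- (vcomp_idr u), <- (vcomp_idr v), <- (vcomp_invr x), !vcompA, E.
  reflexivity.
Qed.

Lemma vcomp_cancell A B (f g h : Hom S A B) (x : Cell g h) (u v : Cell f g) :
  vcomp x u = vcomp x v -> u = v.
Proof.
  intro E. rewrite <- (vcomp_idl u), <- (vcomp_idl v), <- (vcomp_invl x), <- !vcompA, E.
  reflexivity.
Qed.

Lemma vinv_vid A B (f : Hom S A B) : vinv (vid f) = vid f.
Proof. apply (vcomp_cancelr (x := vid f)). rewrite vcomp_invl, vcomp_idl. reflexivity. Qed.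

Lemma vcomp_Kinv A B (f g h : Hom S A B) (x : Cell f g) (z : Cell h g) :
  vcomp x (vcomp (vinv x) z) = z.
Proof. rewrite vcompA, vcomp_invr, vcomp_idl. reflexivity. Qed.

Lemma whiskerl_vcomp A B C (g : Hom S B C) (f1 f2 f3 : Hom S A B)
      (x : Cell f1 f2) (x' : Cell f2 f3) :
  hcomp (vid g) (vcomp x' x) = vcomp (hcomp (vid g) x') (hcomp (vid g) x).
Proof. rewrite <- hcomp_vcomp, vcomp_idl. reflexivity. Qed.

Lemma whiskerr_vcomp A B C (g1 g2 g3 : Hom S B C) (f : Hom S A B)
      (y : Cell g1 g2) (y' : Cell g2 g3) :
  hcomp (vcomp y' y) (vid f) = vcomp (hcomp y' (vid f)) (hcomp y (vid f)).
Proof. rewrite <- hcomp_vcomp, vcomp_idl. reflexivity. Qed.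

Lemma whiskerl_invK A B C (g : Hom S B C) (f1 f2 : Hom S A B) h
      (x : Cell f1 f2) (z : Cell h (comp g f1)) :
  vcomp (hcomp (vid g) (vinv x)) (vcomp (hcomp (vid g) x) z) = z.
Proof. rewrite vcompA, <- whiskerl_vcomp, vcomp_invl, hcomp_id, vcomp_idl. reflexivity. Qed.

Lemma whisker_exchange A B C (g g' : Hom S B C) (f f' : Hom S A B)
      (y : Cell g g') (p : Cell f f') :
  vcomp (hcomp (vid g') p) (hcomp y (vid f)) = vcomp (hcomp y (vid f')) (hcomp (vid g) p).
Proof. rewrite <- !hcomp_vcomp, !vcomp_idl, !vcomp_idr. reflexivity. Qed.

(* Variants precomposed with an arbitrary [z], for rewriting inside right-nested composites. *)
Lemma whisker_exchange_comp A B C (g g' : Hom S B C) (f f' : Hom S A B)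
      (y : Cell g g') (p : Cell f f') h (z : Cell h (comp g f)) :
  vcomp (hcomp (vid g') p) (vcomp (hcomp y (vid f)) z)
  = vcomp (hcomp y (vid f')) (vcomp (hcomp (vid g) p) z).
Proof. rewrite !vcompA, whisker_exchange. reflexivity. Qed.

Lemma whiskers_hcomp_comp A B C (g g' : Hom S B C) (f f' : Hom S A B)
      (y : Cell g g') (p : Cell f f') h (z : Cell h (comp g f)) :
  vcomp (hcomp (vid g') p) (vcomp (hcomp y (vid f)) z) = vcomp (hcomp y p) z.
Proof. rewrite vcompA, <- hcomp_vcomp, vcomp_idl, vcomp_idr. reflexivity. Qed.

Lemma whiskerl_hcomp_comp A B C (g g' : Hom S B C) (f f' f'' : Hom S A B)
      (y : Cell g g') (q : Cell f f') (p : Cell f' f'') h (z : Cell h (comp g f)) :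
  vcomp (hcomp (vid g') p) (vcomp (hcomp y q) z)
  = vcomp (hcomp y (vid f'')) (vcomp (hcomp (vid g) (vcomp p q)) z).
Proof. rewrite !vcompA, <- !hcomp_vcomp, !vcomp_idl, !vcomp_idr. reflexivity. Qed.

Lemma lun_whisker_faithful B D (p q : Hom S B D) (u v : Cell p q) :
  hcomp (vid (one D)) u = hcomp (vid (one D)) v -> u = v.
Proof. intro E. apply (vcomp_cancelr (x := lun p)). rewrite <- !lun_nat, E. reflexivity. Qed.

Lemma run_whisker_faithful A B (p q : Hom S A B) (u v : Cell p q) :
  hcomp u (vid (one A)) = hcomp v (vid (one A)) -> u = v.
Proof. intro E. apply (vcomp_cancelr (x := run p)). rewrite <- !run_nat, E. reflexivity. Qed.

(* Kelly's lemma: the left-unit analogue of the triangle axiom. *)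
Lemma lun_assoc B C D (f : Hom S C D) (s : Hom S B C) :
  vcomp (lun (comp f s)) (assoc (one D) f s) = hcomp (lun f) (vid s).
Proof.
  apply lun_whisker_faithful.
  apply (vcomp_cancelr (x := vcomp (assoc (one D) (comp (one D) f) s)
                                   (hcomp (assoc (one D) (one D) f) (vid s)))).
  rewrite whiskerl_vcomp, <- vcompA, <- pentagon, vcompA, triangle.
  rewrite <- hcomp_id, <- assoc_nat, <- triangle, whiskerr_vcomp.
  symmetry. rewrite vcompA, <- assoc_nat, <- vcompA. reflexivity.
Qed.

Lemma zigzag_whisker A B C (f : Hom S B C) (s : Hom S A B) :
  vcomp (hcomp (vid f) (lun s))
   (vcomp (hcomp (vid f) (hcomp (ev f) (vid s)))
    (vcomp (hcomp (vid f) (vinv (assoc (inv1 f) f s)))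
     (vcomp (assoc f (inv1 f) (comp f s)) (hcomp (coev f) (vid (comp f s))))))
  = lun (comp f s).
Proof.
  apply (vcomp_cancelr (x := assoc (one C) f s)).
  rewrite lun_assoc, <- (zigzag f), !whiskerr_vcomp.
  rewrite <- !vcompA, <- hcomp_id, <- assoc_nat.
  rewrite (vcompA _ (assoc (comp f (inv1 f)) f s)), pentagon.
  rewrite <- !vcompA, whiskerl_invK, (vcompA _ (assoc f (comp (inv1 f) f) s)), <- assoc_nat.
  rewrite <- (triangle f s), <- !vcompA. reflexivity.
Qed.

Lemma zigzag_whisker_comp A B C (f : Hom S B C) (s : Hom S A B) k
      (z : Cell k (comp (one C) (comp f s))) :
  vcomp (hcomp (vid f) (lun s))
   (vcomp (hcomp (vid f) (hcomp (ev f) (vid s)))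
    (vcomp (hcomp (vid f) (vinv (assoc (inv1 f) f s)))
     (vcomp (assoc f (inv1 f) (comp f s)) (vcomp (hcomp (coev f) (vid (comp f s))) z))))
  = vcomp (lun (comp f s)) z.
Proof. rewrite <- (zigzag_whisker f s), <- !vcompA. reflexivity. Qed.

Definition Letter (B C : Ob S) : Type := (Hom S B C + Hom S C B)%type.

Definition letter_hom B C (l : Letter B C) : Hom S B C :=
  match l with inl h => h | inr h => inv1 h end.

Definition letter_inv B C (l : Letter B C) : Letter C B :=
  match l with inl h => inr h | inr h => inl h end.

Lemma letter_invK B C (l : Letter B C) : letter_inv (letter_inv l) = l.
Proof. destruct l; reflexivity. Qed.

Definition letter_counit A B (l' : Letter A B) :
  Cell (comp (letter_hom (letter_inv l')) (letter_hom l')) (one A) :=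
  match l' with inl h => ev h | inr h => vinv (coev h) end.

Section NormalForms.
Variable X : Ob S.

Inductive Path : Ob S -> Type :=
  | pnil : Path X
  | pcons : forall A B, Letter A B -> Path A -> Path B.

Fixpoint path_hom B (t : Path B) : Hom S X B :=
  match t with pnil => one X | pcons l t => comp (letter_hom l) (path_hom t) end.

Definition inverse_letters A B C (l : Letter B C) (l' : Letter A B) : Prop :=
  exists e : A = C, eq_rect A (Letter B) (letter_inv l') C e = l.

(* Equality of 0-cells is not decidable, so cancellation is decided classically. *)
Definition inverse_letters_dec A B C (l : Letter B C) (l' : Letter A B) :
  {e : A = C | eq_rect A (Letter B) (letter_inv l') C e = l} + {~ inverse_letters l l'}.
Proof.
  destruct (excluded_middle_informative (inverse_letters l l')) as [p | n].
  - left. exact (constructive_indefinite_description _ p).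
  - right. exact n.
Defined.

Definition pcons_red B C (l : Letter B C) (t : Path B) : Path C :=
  match t in Path B0 return Letter B0 C -> Path C with
  | pnil => fun l => pcons l pnil
  | @pcons A B0 l' t' => fun l =>
      match inverse_letters_dec l l' with
      | inleft (exist _ e _) => eq_rect A Path t' C e
      | inright _ => pcons l (pcons l' t')
      end
  end l.

Definition pcons_red_cell B C (l : Letter B C) (t : Path B) :
  Cell (comp (letter_hom l) (path_hom t)) (path_hom (pcons_red l t)).
Proof.
  revert l. destruct t as [| A B0 l' t']; intro l; simpl.
  - exact (vid _).
  - destruct (inverse_letters_dec l l') as [[e He] | n].
    + destruct e. simpl in He. subst l.
      exact (vcomp (lun _) (vcomp (hcomp (letter_counit l') (vid _)) (vinv (assoc _ _ _)))).
    + exact (vid _).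
Defined.

Fixpoint reduced B (t : Path B) : Prop :=
  match t with
  | pnil => True
  | pcons l t' => reduced t' /\ pcons_red l t' = pcons l t'
  end.

Lemma pcons_red_inv B C (l : Letter B C) (t : Path B) :
  pcons_red (letter_inv l) (pcons l t) = t.
Proof.
  simpl. destruct (inverse_letters_dec (letter_inv l) l) as [[e He] | n].
  - rewrite <- (eq_rect_eq _ _ _ _ e). reflexivity.
  - exfalso. apply n. exists eq_refl. reflexivity.
Qed.

Lemma reduced_pcons_red B C (l : Letter B C) (t : Path B) :
  reduced t -> reduced (pcons_red l t).
Proof.
  destruct t as [| A B0 l' t']; intro r; simpl.
  - split; auto.
  - destruct (inverse_letters_dec l l') as [[e He] | n].
    + destruct e. exact (proj1 r).
    + split; [exact r |]. simpl.
      destruct (inverse_letters_dec l l') as [[e He] | n'].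
      * exfalso. apply n. exists e. exact He.
      * reflexivity.
Qed.

Lemma pcons_redK B C (l : Letter B C) (t : Path B) :
  reduced t -> pcons_red (letter_inv l) (pcons_red l t) = t.
Proof.
  destruct t as [| A B0 l' t']; intro r.
  - apply pcons_red_inv.
  - simpl pcons_red at 2. destruct (inverse_letters_dec l l') as [[e He] | n].
    + destruct e. simpl in He. subst l. rewrite letter_invK. exact (proj2 r).
    + apply pcons_red_inv.
Qed.

Fixpoint act A B (w : FHom S A B) : Path A -> Path B :=
  match w with
  | Fgen h => pcons_red (inl h)
  | Fone _ => fun t => t
  | Fcomp g f => fun t => act g (act f t)
  | Finv f => actinv f
  end
with actinv A B (w : FHom S A B) : Path B -> Path A :=
  match w with
  | Fgen h => pcons_red (inr h)
  | Fone _ => fun t => t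
  | Fcomp g f => fun t => actinv f (actinv g t)
  | Finv f => act f
  end.

Lemma reduced_act_actinv A B (w : FHom S A B) :
  (forall t, reduced t -> reduced (act w t)) /\
  (forall t, reduced t -> reduced (actinv w t)).
Proof.
  induction w as [A B h | A | A B C g IHg f IHf | A B f IHf]; simpl; split; intros t r.
  - apply reduced_pcons_red, r.
  - apply reduced_pcons_red, r.
  - exact r.
  - exact r.
  - apply IHg, IHf, r.
  - apply IHf, IHg, r.
  - apply IHf, r.
  - apply IHf, r.
Qed.

Lemma reduced_act A B (w : FHom S A B) t : reduced t -> reduced (act w t).
Proof. apply reduced_act_actinv. Qed.

Lemma reduced_actinv A B (w : FHom S A B) t : reduced t -> reduced (actinv w t).
Proof. apply reduced_act_actinv. Qed.

Lemma act_actinvK A B (w : FHom S A B) :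
  (forall t, reduced t -> act w (actinv w t) = t) /\
  (forall t, reduced t -> actinv w (act w t) = t).
Proof.
  induction w as [A B h | A | A B C g IHg f IHf | A B f IHf]; simpl; split; intros t r.
  - exact (pcons_redK (inr h) r).
  - exact (pcons_redK (inl h) r).
  - reflexivity.
  - reflexivity.
  - rewrite (proj1 IHf) by apply reduced_actinv, r. apply IHg, r.
  - rewrite (proj2 IHg) by apply reduced_act, r. apply IHf, r.
  - apply IHf, r.
  - apply IHf, r.
Qed.

Lemma act_actinv A B (w : FHom S A B) t : reduced t -> act w (actinv w t) = t.
Proof. apply act_actinvK. Qed.

Lemma actinv_act A B (w : FHom S A B) t : reduced t -> actinv w (act w t) = t.
Proof. apply act_actinvK. Qed.

Lemma actinv_of_act A B (w : FHom S A B) s t : reduced s -> act w s = t -> actinv w t = s.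
Proof. intros r <-. apply actinv_act, r. Qed.

Definition path_cast B (p q : Path B) (e : p = q) : Cell (path_hom p) (path_hom q) :=
  match e with eq_refl => vid _ end.

Lemma path_cast_irrelevant B (p q : Path B) (e1 e2 : p = q) : path_cast e1 = path_cast e2.
Proof. rewrite (proof_irrelevance _ e1 e2). reflexivity. Qed.

Lemma path_cast_refl B (p : Path B) (e : p = p) : path_cast e = vid (path_hom p).
Proof. rewrite (path_cast_irrelevant e eq_refl). reflexivity. Qed.

Lemma path_cast_trans B (p q u : Path B) (e1 : p = q) (e2 : q = u) h (z : Cell h (path_hom p)) :
  vcomp (path_cast e2) (vcomp (path_cast e1) z) = vcomp (path_cast (eq_trans e1 e2)) z.
Proof. destruct e2, e1. simpl. rewrite vcomp_idl. reflexivity. Qed.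

Lemma vinv_path_cast B (p q : Path B) (e : p = q) : vinv (path_cast e) = path_cast (eq_sym e).
Proof. destruct e. apply vinv_vid. Qed.

(* The reducedness hypothesis is only needed to justify the inverse case. *)
Fixpoint act_cell A B (w : FHom S A B) : forall t : Path A, reduced t ->
    Cell (comp (J1 w) (path_hom t)) (path_hom (act w t)) :=
  match w in FHom _ A B return forall t : Path A, reduced t ->
      Cell (comp (J1 w) (path_hom t)) (path_hom (act w t)) with
  | Fgen h => fun t _ => pcons_red_cell (inl h) t
  | Fone _ => fun t _ => lun (path_hom t)
  | Fcomp g f => fun t r =>
      vcomp (@act_cell _ _ g (act f t) (reduced_act f r))
            (vcomp (hcomp (vid (J1 g)) (@act_cell _ _ f t r)) (assoc _ _ _))
  | Finv f => fun t r =>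
      vcomp (lun (path_hom (actinv f t)))
       (vcomp (hcomp (ev (J1 f)) (vid _))
        (vcomp (vinv (assoc _ _ _))
         (vcomp (hcomp (vid (inv1 (J1 f)))
                       (vinv (@act_cell _ _ f (actinv f t) (reduced_actinv f r))))
                (hcomp (vid _) (path_cast (eq_sym (act_actinv f r)))))))
  end.

Arguments act_cell [A B] w t r.

Lemma act_cell_irrelevant A B (w : FHom S A B) t (r1 r2 : reduced t) :
  act_cell w t r1 = act_cell w t r2.
Proof. rewrite (proof_irrelevance _ r1 r2). reflexivity. Qed.

Lemma act_cell_cast A B (w : FHom S A B) t1 t2 (e : t1 = t2) r1 r2 :
  vcomp (act_cell w t2 r2) (hcomp (vid (J1 w)) (path_cast e))
  = vcomp (path_cast (f_equal (act w) e)) (act_cell w t1 r1).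
Proof. destruct e. simpl. rewrite hcomp_id, vcomp_idr, vcomp_idl. apply act_cell_irrelevant. Qed.

Lemma act_cell_inv_comp A B (f : FHom S A B) t r s rs (e : act f s = t) (q : s = actinv f t) :
  vcomp (act_cell (Finv f) t r)
    (vcomp (hcomp (vid (inv1 (J1 f))) (vcomp (path_cast e) (act_cell f s rs))) (assoc _ _ _))
  = vcomp (path_cast q) (vcomp (lun (path_hom s)) (hcomp (ev (J1 f)) (vid (path_hom s)))).
Proof.
  subst s. simpl. rewrite (act_cell_irrelevant f rs (reduced_actinv f r)).
  rewrite (path_cast_irrelevant e (act_actinv f r)), whiskerl_vcomp, <- !vcompA.
  rewrite <- vinv_path_cast, !whiskerl_invK, vcomp_invl, vcomp_idr, vcomp_idl.
  reflexivity.
Qed.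

Lemma act_cell_inv_comp_comp A B (f : FHom S A B) t r s rs (e : act f s = t) (q : s = actinv f t)
      h (z : Cell h (comp (comp (inv1 (J1 f)) (J1 f)) (path_hom s))) :
  vcomp (act_cell (Finv f) t r)
    (vcomp (hcomp (vid (inv1 (J1 f))) (vcomp (path_cast e) (act_cell f s rs)))
           (vcomp (assoc _ _ _) z))
  = vcomp (path_cast q) (vcomp (lun (path_hom s)) (vcomp (hcomp (ev (J1 f)) (vid (path_hom s))) z)).
Proof.
  rewrite (vcompA z (assoc _ _ _)), vcompA.
  transitivity (vcomp (vcomp (path_cast q) (vcomp (lun (path_hom s))
                  (hcomp (ev (J1 f)) (vid (path_hom s))))) z).
  - f_equal. apply act_cell_inv_comp.
  - rewrite <- !vcompA. reflexivity.
Qed.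

(* [x] is carried by the normalising cells to a mere identification of normal forms. *)
Definition act_coherent A B (f g : FHom S A B) (x : Cell (J1 f) (J1 g)) : Prop :=
  forall t (r : reduced t), exists E : act f t = act g t,
    vcomp (act_cell g t r) (hcomp x (vid (path_hom t))) = vcomp (path_cast E) (act_cell f t r).

Arguments act_coherent [A B] f g x.

Lemma act_coherent_vid A B (f : FHom S A B) : act_coherent f f (vid (J1 f)).
Proof.
  intros t r. exists eq_refl. simpl. rewrite hcomp_id, vcomp_idr, vcomp_idl. reflexivity.
Qed.

Lemma act_coherent_vcomp A B (f g h : FHom S A B) x y :
  act_coherent f g x -> act_coherent g h y -> act_coherent f h (vcomp y x).
Proof.
  intros Hx Hy t r. destruct (Hx t r) as [Ex Hx']. destruct (Hy t r) as [Ey Hy'].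
  exists (eq_trans Ex Ey).
  rewrite whiskerr_vcomp, vcompA, Hy', <- vcompA, Hx', path_cast_trans. reflexivity.
Qed.

Lemma act_coherent_vinv A B (f g : FHom S A B) x :
  act_coherent f g x -> act_coherent g f (vinv x).
Proof.
  intros Hx t r. destruct (Hx t r) as [E Hx']. exists (eq_sym E).
  apply (vcomp_cancelr (x := hcomp x (vid (path_hom t)))).
  rewrite <- vcompA, <- whiskerr_vcomp, vcomp_invl, hcomp_id, vcomp_idr.
  rewrite <- vcompA, Hx', path_cast_trans, path_cast_refl, vcomp_idl. reflexivity.
Qed.

Lemma act_coherent_hcomp A B C (g g' : FHom S B C) (f f' : FHom S A B) y x :
  act_coherent g g' y -> act_coherent f f' x -> act_coherent (Fcomp g f) (Fcomp g' f') (hcomp y x).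
Proof.
  intros Hy Hx t r. simpl.
  destruct (Hx t r) as [Ex Hx']. destruct (Hy (act f t) (reduced_act f r)) as [Ey Hy'].
  exists (eq_trans Ey (f_equal (act g') Ex)).
  rewrite <- !vcompA, assoc_nat, whiskerl_hcomp_comp, Hx', whiskerl_vcomp, <- !vcompA.
  rewrite <- whisker_exchange_comp.
  rewrite (vcompA _ (hcomp (vid (J1 g')) (path_cast Ex))), (act_cell_cast g' Ex (reduced_act f r)).
  rewrite <- vcompA, (vcompA _ (hcomp y (vid _))), Hy', <- vcompA, path_cast_trans. reflexivity.
Qed.

Lemma act_coherent_inv2 A B (f f' : FHom S A B) x :
  act_coherent f f' x -> act_coherent (Finv f) (Finv f') (inv2 x).
Proof.
  intros Hx t r. simpl act.
  set (s := actinv f t). assert (rs : reduced s) by apply reduced_actinv, r.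
  assert (e0 : act f s = t) by apply act_actinv, r.
  destruct (Hx s rs) as [Es Hs].
  assert (E : actinv f' t = s) by (apply actinv_of_act; [exact rs | rewrite <- Es; exact e0]).
  exists (eq_sym E).
  assert (Hs' : act_cell f s rs
                = vcomp (path_cast (eq_sym Es)) (vcomp (act_cell f' s rs) (hcomp x (vid _)))).
  { rewrite Hs, path_cast_trans, path_cast_refl, vcomp_idl. reflexivity. }
  apply (vcomp_cancelr (x := vcomp (hcomp (vid (inv1 (J1 f)))
                                          (vcomp (path_cast e0) (act_cell f s rs)))
                                   (assoc _ _ _))).
  pose proof (act_cell_inv_comp (f := f) r rs e0 eq_refl) as K.
  cbn [J1 act] in K |- *. fold s in K.
  symmetry. rewrite <- vcompA, K. symmetry.
  rewrite <- !vcompA, <- whisker_exchange_comp, Hs', path_cast_trans.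
  rewrite (vcompA (hcomp x (vid _))), (whiskerl_vcomp _ (hcomp x (vid (path_hom s)))).
  rewrite <- !vcompA, whiskers_hcomp_comp, <- assoc_nat.
  rewrite (act_cell_inv_comp_comp (f := f') r rs (eq_trans (eq_sym Es) e0) (eq_sym E)).
  rewrite <- whiskerr_vcomp, ev_nat, vcomp_idl, path_cast_trans.
  f_equal. apply path_cast_irrelevant.
Qed.

Lemma act_coherent_assoc A B C D (h : FHom S C D) (g : FHom S B C) (f : FHom S A B) :
  act_coherent (Fcomp (Fcomp h g) f) (Fcomp h (Fcomp g f)) (assoc (J1 h) (J1 g) (J1 f)).
Proof.
  intros t r. exists eq_refl. simpl. rewrite vcomp_idl.
  rewrite (act_cell_irrelevant h (t := act g (act f t)) (reduced_act (Fcomp g f) r) (reduced_act g (reduced_act f r))).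
  rewrite !whiskerl_vcomp, <- !vcompA, <- pentagon.
  rewrite (vcompA (assoc _ _ _) (assoc _ _ _) (hcomp (vid _) (hcomp (vid _) _))).
  rewrite <- assoc_nat, hcomp_id, <- !vcompA. reflexivity.
Qed.

Lemma act_coherent_lun A B (f : FHom S A B) : act_coherent (Fcomp (Fone B) f) f (lun (J1 f)).
Proof.
  intros t r. exists eq_refl. simpl. rewrite vcomp_idl, vcompA, lun_nat, <- vcompA, lun_assoc.
  reflexivity.
Qed.

Lemma act_coherent_run A B (f : FHom S A B) : act_coherent (Fcomp f (Fone A)) f (run (J1 f)).
Proof.
  intros t r. exists eq_refl. simpl. rewrite vcomp_idl, triangle.
  rewrite (act_cell_irrelevant f (t := t) (reduced_act (Fone A) r) r). reflexivity.
Qed.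

Lemma act_coherent_ev A B (f : FHom S A B) :
  act_coherent (Fcomp (Finv f) f) (Fone A) (ev (J1 f)).
Proof.
  intros t r. simpl act. exists (actinv_act f r).
  change (act_cell (Fcomp (Finv f) f) t r) with
    (vcomp (act_cell (Finv f) (act f t) (reduced_act f r))
           (vcomp (hcomp (vid (J1 (Finv f))) (act_cell f t r)) (assoc (J1 (Finv f)) (J1 f) (path_hom t)))).
  change (act_cell (Fone A) t r) with (lun (path_hom t)).
  pose proof (act_cell_inv_comp (f := f) (reduced_act f r) r eq_refl (eq_sym (actinv_act f r))) as K.
  simpl path_cast in K. rewrite vcomp_idl in K. cbn [J1 act] in K |- *. rewrite K.
  rewrite path_cast_trans, path_cast_refl, vcomp_idl. reflexivity.
Qed.

Lemma act_coherent_coev A B (f : FHom S A B) :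
  act_coherent (Fone B) (Fcomp f (Finv f)) (coev (J1 f)).
Proof.
  intros t r. simpl act. exists (eq_sym (act_actinv f r)). simpl.
  rewrite (act_cell_irrelevant f (t := actinv f t) (reduced_act (Finv f) r) (reduced_actinv f r)).
  rewrite !whiskerl_vcomp, <- !vcompA.
  rewrite (vcompA _ (assoc _ _ _) (hcomp (vid _) (hcomp (vid _) (path_cast _)))).
  rewrite <- assoc_nat, hcomp_id, <- !vcompA.
  rewrite (vcompA _ (assoc _ _ _) (hcomp (vid _) (hcomp (vid _) (vinv _)))).
  rewrite <- assoc_nat, hcomp_id, <- !vcompA.
  rewrite whisker_exchange, whisker_exchange_comp, zigzag_whisker_comp.
  rewrite (vcompA _ (hcomp (vid (one B)) (vinv _))), lun_nat, <- vcompA, vcomp_Kinv, lun_nat.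
  reflexivity.
Qed.

Lemma act_coherent_J2 A B (f g : FHom S A B) (x : FCell f g) : act_coherent f g (J2 x).
Proof.
  induction x; simpl J2.
  - apply act_coherent_vid.
  - apply act_coherent_vcomp; assumption.
  - apply act_coherent_vinv; assumption.
  - apply act_coherent_hcomp; assumption.
  - apply act_coherent_inv2; assumption.
  - apply act_coherent_assoc.
  - apply act_coherent_lun.
  - apply act_coherent_run.
  - apply act_coherent_ev.
  - apply act_coherent_coev.
Qed.

(* On the empty word, [act_cell] is invertible and the cast is unique, so [x * 1_X] is determined. *)
Lemma act_coherent_unique B (f g : FHom S X B) (x y : Cell (J1 f) (J1 g)) :
  act_coherent f g x -> act_coherent f g y -> x = y.
Proof.
  intros Hx Hy.
  destruct (Hx pnil I) as [Ex Hx']. destruct (Hy pnil I) as [Ey Hy'].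
  apply run_whisker_faithful, (vcomp_cancell (x := act_cell g pnil I)).
  refine (eq_trans Hx' (eq_trans _ (eq_sym Hy'))).
  rewrite (path_cast_irrelevant Ex Ey). reflexivity.
Qed.

End NormalForms.
End Bigroupoid.

Theorem theoremB11 :
  forall (S : BigSig), is_bigroupoid S ->
  forall (A B : Ob S) (f g : FHom S A B) (x y : FCell f g),
    J2 x = J2 y.
Proof.
  intros S HS A B f g x y.
  apply (act_coherent_unique HS); apply act_coherent_J2, HS.
Qed.
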